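(* Fix integers $N\ge 2$ and $K\ge 1$. For every $r\ge 2$, $M^{\text{TransE}}$ does not subsume $M^{\text{RESCAL}}_r$, i.e. $\pi(\mathcal{M}^{\text{RESCAL}}_r)\not\subseteq\pi(\mathcal{M}^{\text{TransE}})$.
   Context: There are $N$ entities and $K$ relations. A score-based model assigns a score $s_k(i,j)\in\mathbb{R}$ to each triple, $i,j\in\{1,\dots,N\}$, $k\in\{1,\dots,K\}$; its scoring tensor $\mathcal{S}\in\mathbb{R}^{N\times N\times K}$ has frontal slices $\mathbf{S}_k$ with $[\mathbf{S}_k]_{ij}=s_k(i,j)$. For a real $N\times N$ matrix $\mathbf{S}$, $\pi(\mathbf{S})$ is the matrix of dense ranks: $\pi_{ij}(\mathbf{S})=1+$ (number of distinct values among entries of $\mathbf{S}$ strictly larger than $s_{ij}$). For tensors, $\pi$ acts slicewise; for a set $X$, $\pi(X)=\{\pi(x):x\in X\}$. RESCAL of size $r$: parameters $\mathbf{A}\in\mathbb{R}^{N\times r}$ (rows $\mathbf{a}_i$), $\mathbf{R}_1,\dots,\mathbf{R}_K\in\mathbb{R}^{r\times r}$, score $\mathbf{a}_i^T\mathbf{R}_k\mathbf{a}_j$. TransE of size $r$: parameters $\mathbf{A}\in\mathbb{R}^{N\times r}$, $\mathbf{R}\in\mathbb{R}^{K\times r}$ (rows $\mathbf{r}_k$), score $-\|\mathbf{a}_i+\mathbf{r}_k-\mathbf{a}_j\|_2^2$. $\mathcal{M}^t_r$ is the set of scoring tensors of all models of type $t$ and size $r$, and $\mathcal{M}^t=\bigcup_{r\in\mathbb{N}^+}\mathcal{M}^t_r$.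 A class $M^{t_2}$ subsumes $M^{t_1}$ if $\pi(\mathcal{M}^{t_1})\subseteq\pi(\mathcal{M}^{t_2})$. *)

From HB Require Import structures.
From mathcomp Require Import all_boot all_order all_algebra.
From mathcomp Require Import reals.
Set Implicit Arguments. Unset Strict Implicit. Unset Printing Implicit Defensive.
Import Order.TTheory GRing.Theory Num.Theory.
Local Open Scope ring_scope.

(* A scoring tensor: K frontal slices, each an N x N real matrix;
   [S k] i j = s_k(i,j). Entities and relations are indexed from 0. *)
Definition tensor (R : realType) (N K : nat) := {ffun 'I_K -> 'M[R]_N}.

Definition dense_rank_entry (R : realType) (N : nat) (S : 'M[R]_N)
    (i j : 'I_N) : nat :=
  (size (undup [seq S p.1 p.2 | p <- enum {: 'I_N * 'I_N}
                                & S i j < S p.1 p.2]%R)).+1.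

Definition dense_rank (R : realType) (N : nat) (S : 'M[R]_N) : 'M[nat]_N :=
  \matrix_(i, j) dense_rank_entry S i j.

Definition pi_tensor (R : realType) (N K : nat) (S : tensor R N K)
    : {ffun 'I_K -> 'M[nat]_N} :=
  [ffun k => dense_rank (S k)].

Definition is_rescal (R : realType) (N K r : nat) (S : tensor R N K) : Prop :=
  exists (A : 'M[R]_(N, r)) (Rk : 'I_K -> 'M[R]_r),
    forall k i j, S k i j = (row i A *m Rk k *m (row j A)^T) ord0 ord0.

Definition is_transe (R : realType) (N K r : nat) (S : tensor R N K) : Prop :=
  exists (A : 'M[R]_(N, r)) (Rm : 'M[R]_(K, r)),
    forall k i j, S k i j = - \sum_(l < r) (A i l + Rm k l - A j l) ^+ 2.

Definition is_transe_any (R : realType) (N K : nat) (S : tensor R N K) : Prop :=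
  exists r, (0 < r)%N /\ is_transe r S.

(* A TransE score of a reflexive triple is [- ||r_k||^2], independent of the
   entity, so in every slice of a TransE scoring tensor all diagonal entries
   share one dense rank.  The RESCAL model of any size [r >= 1] whose only
   nonzero embedding is [a_i0 = e_0], with identity relation matrices, scores
   [(i0, i0)] with [1] and every other reflexive triple with [0]; its diagonal
   thus carries two different dense ranks, and no TransE model can match it. *)
From HB Require Import structures.
From mathcomp Require Import all_boot all_order all_algebra.
From mathcomp Require Import reals.
Import Order.TTheory GRing.Theory Num.Theory.
Local Open Scope ring_scope.

Section DenseRank.

Context {R : realType} {N : nat} (S : 'M[R]_N).

Definition values_above (x : R) : seq R :=
  [seq S p.1 p.2 | p <- enum {: 'I_N * 'I_N} & x < S p.1 p.2].

Lemma dense_rank_entryE i j :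
  dense_rank_entry S i j = (size (undup (values_above (S i j)))).+1.
Proof. by []. Qed.

Lemma mem_values_above x i j : (S i j \in values_above x) = (x < S i j).
Proof.
apply/mapP/idP => [[p] | lt_x]; last by exists (i, j); rewrite // mem_filter lt_x mem_enum.
by rewrite mem_filter => /andP[lt_x _] ->.
Qed.

Lemma values_aboveP x v : reflect (exists i j, v = S i j /\ x < S i j) (v \in values_above x).
Proof.
apply: (iffP mapP) => [[[i j]] | [i [j [-> lt_x]]]].
  by rewrite mem_filter => /andP[/= lt_x _] ->; exists i, j.
by exists (i, j); rewrite // mem_filter lt_x mem_enum.
Qed.

Lemma dense_rank_entry_lt {a b c d} :
  S a b < S c d -> (dense_rank_entry S c d < dense_rank_entry S a b)%N.
Proof.
move=> lt_ab_cd; rewrite !dense_rank_entryE ltnS.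
have uniq_cons : uniq (S c d :: undup (values_above (S c d))).
  by rewrite /= undup_uniq mem_undup mem_values_above ltxx.
apply: (uniq_leq_size uniq_cons) => v.
rewrite inE !mem_undup => /orP[/eqP -> | /values_aboveP[i [j [-> lt_cd]]]].
  by rewrite mem_values_above.
by rewrite mem_values_above (lt_trans lt_ab_cd).
Qed.

End DenseRank.

Lemma pi_tensorE {R : realType} {N K : nat} (S : tensor R N K) k i j :
  pi_tensor S k i j = dense_rank_entry (S k) i j.
Proof. by rewrite ffunE mxE. Qed.

Lemma transe_diag {R : realType} {N K r : nat} {T : tensor R N K} :
  is_transe r T -> forall k i j, T k i i = T k j j.
Proof.
have diag_norm A (Rm : 'M[R]_(K, r)) k (i : 'I_N) :
    - \sum_(l < r) (A i l + Rm k l - A i l) ^+ 2 = - \sum_(l < r) Rm k l ^+ 2.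
  by congr (- _); apply: eq_bigr => l _; rewrite addrAC subrr add0r.
by move=> [A [Rm T_eq]] k i j; rewrite !T_eq !diag_norm.
Qed.

Lemma rescal_scoreE {R : realType} {N r : nat} (A : 'M[R]_(N, r)) (M : 'M[R]_r) i j :
  (row i A *m M *m (row j A)^T) ord0 ord0 = (A *m M *m A^T) i j.
Proof. by rewrite -!row_mul tr_row !mxE; apply: eq_bigr => l _; rewrite !mxE. Qed.

Lemma is_rescal_delta {R : realType} {N : nat} (K : nat) {r : nat} (i0 : 'I_N) :
  (0 < r)%N -> is_rescal r [ffun _ : 'I_K => delta_mx i0 i0 : 'M[R]_N].
Proof.
move=> r_gt0; pose l0 : 'I_r := Ordinal r_gt0.
exists (delta_mx i0 l0), (fun _ => 1%:M) => k i j.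
by rewrite rescal_scoreE mulmx1 trmx_delta mul_delta_mx ffunE.
Qed.

Theorem theorem2 (R : realType) (N K r : nat) :
  (2 <= N)%N -> (1 <= K)%N -> (2 <= r)%N ->
  ~ (forall S : tensor R N K, is_rescal r S ->
       exists T : tensor R N K, is_transe_any T /\ pi_tensor T = pi_tensor S).
Proof.
move=> N_ge2 K_ge1 r_ge2 subsumes.
pose i0 : 'I_N := Ordinal (ltnW N_ge2); pose i1 : 'I_N := Ordinal N_ge2.
pose k0 : 'I_K := Ordinal K_ge1.
pose S : tensor R N K := [ffun _ => delta_mx i0 i0].
have [T [[r' [_ transeT]] piTS]] := subsumes S (is_rescal_delta K i0 (ltnW r_ge2)).
have rankT : dense_rank_entry (T k0) i0 i0 = dense_rank_entry (T k0) i1 i1.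
  by rewrite !dense_rank_entryE (transe_diag transeT k0 i0 i1).
have S_diag : S k0 i1 i1 < S k0 i0 i0 by rewrite !ffunE !mxE !eqxx ltr01.
move: (dense_rank_entry_lt _ S_diag) rankT.
rewrite -!pi_tensorE piTS => lt_ranks eq_ranks.
by rewrite eq_ranks ltnn in lt_ranks.
Qed.
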